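(* Let $G$ be a finite group acting (on the right, by functors) on a finite category $\mathcal S$, and let $\mathcal S_{hG}$ be the homotopy orbit category (Grothendieck construction), so that $|\mathcal S_{hG}(a,b)|=\sum_{g\in G}|\mathcal S(a,bg^{-1})|$. Let $\mathcal F$ be a finite category with the same objects as $\mathcal S$ and let $d_\bullet,t^\bullet:\mathrm{Ob}(\mathcal S)\to\mathbb Q$ be functions such that $d_a|\mathcal F(a,b)|t^b=|\mathcal S_{hG}(a,b)|$ for all objects $a,b$. (1) If $m^\bullet:\mathrm{Ob}(\mathcal S)\to\mathbb Q$ satisfies $\sum_b|\mathcal S(a,b)|m^b=d_a$ for all $a$, and $d_\bullet$ is $G$-invariant, then $|G|^{-1}t^\bullet m^\bullet$ is a weighting for $\mathcal F$. (2) If $m_\bullet:\mathrm{Ob}(\mathcal S)\to\mathbb Q$ satisfies $\sum_a m_a|\mathcal S(a,b)|=t^b$ for all $b$, and $t^\bullet$ is $G$-invariant, then $|G|^{-1}m_\bullet d_\bullet$ is a coweighting for $\mathcal F$. (3) Suppose $\mathcal S$ has Möbius inversion, i.e. the matrix $(|\mathcal S(a,b)|)_{a,b}$ is invertible with inverse $\mu$. If $d_\bullet$ is $G$-invariant then $k^a=|G|^{-1}\sum_b t^a\mu(a,b)d_b$ is a weighting for $\mathcal F$, and if $t^\bullet$ is $G$-invariant then $k_b=|G|^{-1}\sum_a t^a\mu(a,b)d_b$ is a coweighting for $\mathcal F$.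
   Context: The homotopy orbit category $\mathcal S_{hG}$ has the same objects as $\mathcal S$ and morphisms $a\to b$ the pairs $(g,\varphi)$ with $g\in G$ and $\varphi\in\mathcal S(ag,b)$; since $G$ acts by functors, $|\mathcal S(ag,b)|=|\mathcal S(a,bg^{-1})|$. A function on objects is $G$-invariant if it is constant on $G$-orbits. For a finite category $\mathcal C$, a weighting is $k^\bullet:\mathrm{Ob}(\mathcal C)\to\mathbb Q$ with $\sum_b|\mathcal C(a,b)|k^b=1$ for all objects $a$, and a coweighting is $k_\bullet$ with $\sum_ak_a|\mathcal C(a,b)|=1$ for all objects $b$. *)

From HB Require Import structures.
From mathcomp Require Import all_boot all_order all_algebra all_fingroup.
Set Implicit Arguments. Unset Strict Implicit. Unset Printing Implicit Defensive.
Import GRing.Theory Num.Theory.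
Local Open Scope ring_scope.

Record fincat (Ob : finType) := FinCat {
  homc : Ob -> Ob -> finType;
  idm : forall a, homc a a;
  comp : forall a b c, homc a b -> homc b c -> homc a c;  (* diagrammatic order *)
  comp_id_l : forall a b (f : homc a b), comp (idm a) f = f;
  comp_id_r : forall a b (f : homc a b), comp f (idm b) = f;
  comp_assoc : forall a b c d (f : homc a b) (g : homc b c) (h : homc c d),
      comp (comp f g) h = comp f (comp g h)
}.

(* Total space of the morphisms of C, used to state equalities of morphisms
   between a priori different (but equal) pairs of objects. *)
Definition morph (Ob : finType) (C : fincat Ob) :=
  {p : Ob * Ob & homc C p.1 p.2}.
Definition Morph (Ob : finType) (C : fincat Ob) (a b : Ob) (f : homc C a b)
  : morph C := existT (fun p : Ob * Ob => homc C p.1 p.2) (a, b) f.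

Record fun_action (gT : finGroupType) (Ob : finType) (C : fincat Ob) := FunAction {
  oact : Ob -> gT -> Ob;
  mact : forall (g : gT) a b, homc C a b -> homc C (oact a g) (oact b g);
  mact_id : forall g a, mact g (idm C a) = idm C (oact a g);
  mact_comp : forall g a b c (f : homc C a b) (h : homc C b c),
      mact g (comp f h) = comp (mact g f) (mact g h);
  oact1 : forall a, oact a 1%g = a;
  oactM : forall a g h, oact a (g * h)%g = oact (oact a g) h;
  mact1 : forall a b (f : homc C a b), Morph (mact 1%g f) = Morph f;
  mactM : forall g h a b (f : homc C a b),
      Morph (mact (g * h)%g f) = Morph (mact h (mact g f))
}.

(* Morphisms a -> b of the homotopy orbit category S_hG: pairs (g, phi) with
   phi in S(a g, b). *)
Definition hG_hom (gT : finGroupType) (Ob : finType) (S : fincat Ob)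
  (A : fun_action gT S) (a b : Ob) : finType :=
  {g : gT & homc S (oact A a g) b}.

Definition G_invariant (gT : finGroupType) (Ob : finType) (S : fincat Ob)
  (A : fun_action gT S) (f : Ob -> rat) : Prop :=
  forall a g, f (oact A a g) = f a.

Definition weighting (Ob : finType) (C : fincat Ob) (k : Ob -> rat) : Prop :=
  forall a, \sum_(b : Ob) (#|{: homc C a b}|%:R * k b) = 1.

Definition coweighting (Ob : finType) (C : fincat Ob) (k : Ob -> rat) : Prop :=
  forall b, \sum_(a : Ob) (k a * #|{: homc C a b}|%:R) = 1.

Definition mobius_inverse (Ob : finType) (C : fincat Ob) (mu : Ob -> Ob -> rat)
  : Prop :=
  (forall a c, \sum_(b : Ob) (#|{: homc C a b}|%:R * mu b c) = (a == c)%:R) /\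
  (forall a c, \sum_(b : Ob) (mu a b * #|{: homc C b c}|%:R) = (a == c)%:R).

(* Summing the factorisation [d a * |F(a,b)| * t b = |S_hG(a,b)|] against [m]
   reduces everything to [\sum_b |S_hG(a,b)| m b = \sum_g \sum_b |S(a g, b)| m b],
   which is [|G| d a] when [m] solves [|S| m = d] and [d] is G-invariant;
   dividing by [d a], nonzero because [S_hG(a,a)] contains the identity, gives
   the weighting.  Coweightings are dual, using [|S(a g, b)| = |S(a, b g^-1)|].
   A Möbius inverse provides the solutions [m = mu d] and [m = t mu]. *)

From Pilot Require Import Defs.
From HB Require Import structures.
From mathcomp Require Import all_boot all_order all_algebra all_fingroup.
From Stdlib Require Import Eqdep_dec.
From mathcomp Require Import ring.
Set Implicit Arguments. Unset Strict Implicit. Unset Printing Implicit Defensive.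
Import GRing.Theory Num.Theory.
Local Open Scope ring_scope.

Section HomotopyOrbitCounts.
Variables (gT : finGroupType) (Ob : finType) (S : fincat Ob) (A : fun_action gT S).

Lemma card_hG_hom a b :
  (#|{: hG_hom A a b}|%:R : rat) = \sum_(g : gT) #|{: homc S (Defs.oact A a g) b}|%:R.
Proof.
by rewrite /hG_hom card_tagged sumnE big_map big_enum natr_sum.
Qed.

Lemma card_hG_hom_refl_gt0 a : (0 < #|{: hG_hom A a a}|)%N.
Proof.
rewrite /hG_hom card_tagged sumnE big_map big_enum (bigD1 1%g) //= oact1.
by apply: leq_trans (leq_addr _ _); apply/card_gt0P; exists (Defs.idm S a).
Qed.

Lemma Morph_inj x y (f1 f2 : homc S x y) : Morph f1 = Morph f2 -> f1 = f2.
Proof.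
move=> eq_f; apply: (inj_pair2_eq_dec _ _ _ _ _ _ eq_f) => p q.
by case: (p =P q); [left | right].
Qed.

Lemma mact_inj g x y : injective (@Defs.mact _ _ _ A g x y).
Proof.
move=> f1 f2 eq_gf; apply: Morph_inj.
by rewrite -(mact1 A f1) -(mact1 A f2) -(mulgV g) !mactM eq_gf.
Qed.

Lemma leq_card_hom_oact g x y :
  (#|{: homc S x y}| <= #|{: homc S (Defs.oact A x g) (Defs.oact A y g)}|)%N.
Proof. by rewrite -(card_codom (@mact_inj g x y)) max_card. Qed.

Lemma card_hom_oactV a b g :
  #|{: homc S (Defs.oact A a g) b}| = #|{: homc S a (Defs.oact A b g^-1)}|.
Proof.
apply/eqP; rewrite eqn_leq; apply/andP; split.
  by have := leq_card_hom_oact g^-1 (Defs.oact A a g) b; rewrite -oactM mulgV oact1.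
by have := leq_card_hom_oact g a (Defs.oact A b g^-1); rewrite -oactM mulVg oact1.
Qed.

Lemma sum_card_hG_hom_weight (d m : Ob -> rat) a :
  (forall a, \sum_b #|{: homc S a b}|%:R * m b = d a) -> G_invariant A d ->
  \sum_b #|{: hG_hom A a b}|%:R * m b = #|gT|%:R * d a.
Proof.
move=> Sm_d d_inv.
under eq_bigr => b _ do rewrite card_hG_hom mulr_suml.
rewrite exchange_big /=.
under eq_bigr => g _ do rewrite Sm_d d_inv.
by rewrite sumr_const mulr_natl.
Qed.

Lemma sum_card_hG_hom_coweight (t m : Ob -> rat) b :
  (forall b, \sum_a m a * #|{: homc S a b}|%:R = t b) -> G_invariant A t ->
  \sum_a m a * #|{: hG_hom A a b}|%:R = #|gT|%:R * t b.
Proof.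
move=> mS_t t_inv.
under eq_bigr => a _ do rewrite card_hG_hom mulr_sumr.
rewrite exchange_big /=.
under eq_bigr => g _ do (under eq_bigr => a _ do rewrite card_hom_oactV;
                         rewrite mS_t t_inv).
by rewrite sumr_const mulr_natl.
Qed.

End HomotopyOrbitCounts.

Section MobiusSolutions.
Variables (Ob : finType) (C : fincat Ob) (mu : Ob -> Ob -> rat).
Hypothesis mu_inv : mobius_inverse C mu.

Lemma mobius_right_solution (d : Ob -> rat) a :
  \sum_b #|{: homc C a b}|%:R * (\sum_c mu b c * d c) = d a.
Proof.
under eq_bigr => b _ do rewrite mulr_sumr.
rewrite exchange_big /=.
under eq_bigr => c _ do (under eq_bigr => b _ do rewrite mulrA;
                         rewrite -mulr_suml mu_inv.1).
rewrite (bigD1 a) //= eqxx mul1r big1 ?addr0 // => c.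
by rewrite eq_sym => /negbTE ->; rewrite mul0r.
Qed.

Lemma mobius_left_solution (t : Ob -> rat) b :
  \sum_a (\sum_c t c * mu c a) * #|{: homc C a b}|%:R = t b.
Proof.
under eq_bigr => a _ do rewrite mulr_suml.
rewrite exchange_big /=.
under eq_bigr => c _ do (under eq_bigr => a _ do rewrite -mulrA;
                         rewrite -mulr_sumr mu_inv.2).
rewrite (bigD1 b) //= eqxx mulr1 big1 ?addr0 // => c.
by rewrite eq_sym => /negbTE ->; rewrite mulr0.
Qed.

End MobiusSolutions.

Section Factorisation.
Variables (gT : finGroupType) (Ob : finType) (S : fincat Ob) (A : fun_action gT S).
Variables (F : fincat Ob) (d t : Ob -> rat).
Hypothesis hdt : forall a b,
  d a * #|{: homc F a b}|%:R * t b = #|{: hG_hom A a b}|%:R.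

Let card_gT_neq0 : (#|gT|%:R : rat) != 0.
Proof. by rewrite pnatr_eq0 -lt0n; apply/card_gt0P; exists 1%g. Qed.

Let card_hG_hom_refl_neq0 a : (#|{: hG_hom A a a}|%:R : rat) != 0.
Proof. by rewrite pnatr_eq0 -lt0n card_hG_hom_refl_gt0. Qed.

Lemma factor_left_neq0 a : d a != 0.
Proof. by apply: contra_neq (card_hG_hom_refl_neq0 a) => d0; rewrite -hdt d0 !mul0r. Qed.

Lemma factor_right_neq0 b : t b != 0.
Proof. by apply: contra_neq (card_hG_hom_refl_neq0 b) => t0; rewrite -hdt t0 mulr0. Qed.

Lemma weighting_of_solution (m : Ob -> rat) :
  (forall a, \sum_b #|{: homc S a b}|%:R * m b = d a) -> G_invariant A d ->
  weighting F (fun b => (#|gT|%:R)^-1 * t b * m b).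
Proof.
move=> Sm_d d_inv a; apply: (mulfI (factor_left_neq0 a)).
rewrite mulr1 mulr_sumr.
transitivity ((#|gT|%:R)^-1 * \sum_b #|{: hG_hom A a b}|%:R * m b).
  by rewrite mulr_sumr; apply: eq_bigr => b _; rewrite -hdt; ring.
by rewrite (sum_card_hG_hom_weight a Sm_d d_inv) mulrA mulVf ?mul1r.
Qed.

Lemma coweighting_of_solution (m : Ob -> rat) :
  (forall b, \sum_a m a * #|{: homc S a b}|%:R = t b) -> G_invariant A t ->
  coweighting F (fun a => (#|gT|%:R)^-1 * m a * d a).
Proof.
move=> mS_t t_inv b; apply: (mulIf (factor_right_neq0 b)).
rewrite mul1r mulr_suml.
transitivity ((#|gT|%:R)^-1 * \sum_a m a * #|{: hG_hom A a b}|%:R).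
  by rewrite mulr_sumr; apply: eq_bigr => a _; rewrite -hdt; ring.
by rewrite (sum_card_hG_hom_coweight b mS_t t_inv) mulrA mulVf ?mul1r.
Qed.

End Factorisation.

Theorem theorem2p8 (gT : finGroupType) (Ob : finType)
  (S : fincat Ob) (A : fun_action gT S) (F : fincat Ob) (d t : Ob -> rat)
  (hdt : forall a b,
     d a * #|{: homc F a b}|%:R * t b = #|{: hG_hom A a b}|%:R) :
  (forall m : Ob -> rat,
     (forall a, \sum_(b : Ob) (#|{: homc S a b}|%:R * m b) = d a) ->
     G_invariant A d ->
     weighting F (fun b => (#|gT|%:R)^-1 * t b * m b)) /\
  (forall m : Ob -> rat,
     (forall b, \sum_(a : Ob) (m a * #|{: homc S a b}|%:R) = t b) ->
     G_invariant A t ->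
     coweighting F (fun a => (#|gT|%:R)^-1 * m a * d a)) /\
  (forall mu : Ob -> Ob -> rat,
     mobius_inverse S mu ->
     (G_invariant A d ->
        weighting F (fun a => (#|gT|%:R)^-1 * \sum_(b : Ob) (t a * mu a b * d b))) /\
     (G_invariant A t ->
        coweighting F (fun b => (#|gT|%:R)^-1 * \sum_(a : Ob) (t a * mu a b * d b)))).
Proof.
split; first exact: weighting_of_solution hdt.
split; first exact: coweighting_of_solution hdt.
move=> mu mu_inv; split=> inv.
- move=> a; rewrite -[RHS](weighting_of_solution hdt (mobius_right_solution mu_inv d) inv a).
  apply: eq_bigr => b _; rewrite -mulrA [t b * _]mulr_sumr.
  by under [in RHS]eq_bigr do rewrite mulrA.
- move=> b; rewrite -[RHS](coweighting_of_solution hdt (mobius_left_solution mu_inv t) inv b).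
  by apply: eq_bigr => a _; rewrite -mulrA [_ * d a]mulr_suml.
Qed.
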